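(* For every base $\mathcal{B}$, atomic multisets $L,K$ and ILL formulae $\varphi,\psi,\chi$: if $\Vdash^L_{\mathcal{B}}\varphi\otimes\psi$ and $\varphi,\psi\Vdash^K_{\mathcal{B}}\chi$, then $\Vdash^{L,K}_{\mathcal{B}}\chi$.
   Context: Fix a set $\mathbb{A}$ of propositional atoms. ILL formulae: $\phi ::= p\in\mathbb{A} \mid \top \mid 0 \mid 1 \mid \phi\multimap\phi \mid \phi\otimes\phi \mid \phi\,\&\,\phi \mid \phi\oplus\phi \mid\ !\phi$. All multisets are finite; ''$\Gamma,\Delta$'' denotes multiset union. Atomic rules and bases: an atomic sequent is $P\Rightarrow p$ with $P$ a multiset of atoms, $p$ an atom. An atomic box is a multiset of atomic sequents. An atomic rule is a triple $\langle\mathbf{A},\mathbf{S},p\rangle$ with $\mathbf{A}$ a multiset of atomic boxes, $\mathbf{S}$ an atomic box, $p$ an atom. A base is a set of atomic rules. An atom $p$ is persistent in $\mathcal{B}$ if some $\langle\varnothing,\mathbf{S},p\rangle\in\mathcal{B}$ has $\mathbf{S}\neq\varnothing$. Derivability $\vdash_{\mathcal{B}}$: (Ref) $p\vdash_{\mathcal{B}}p$; (App) if $\langle\mathbf{A},\mathbf{S},p\rangle\in\mathcal{B}$ with $\mathbf{A}=\{\mathbf{T}_1,\dots,\mathbf{T}_m\}$, and there are atomic multisets $C_1,\dots,C_n$ ($n\ge m$) and a multiset $D=\{d_{m+1},\dots,d_n\}$ of atoms persistent in $\mathcal{B}$ such that $C_i,Q\vdash_{\mathcal{B}}q$ for every $i\le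 m$ and every $Q\Rightarrow q\in\mathbf{T}_i$, $C_j\vdash_{\mathcal{B}}d_j$ for every $m<j\le n$, and $D,U\vdash_{\mathcal{B}}v$ for every $U\Rightarrow v\in\mathbf{S}$, then $C_1,\dots,C_n\vdash_{\mathcal{B}}p$. Support $\Vdash^L_{\mathcal{B}}$ (base $\mathcal{B}$, atomic multiset $L$), by induction on formulae: $\Vdash^L_{\mathcal{B}}p$ iff $L\vdash_{\mathcal{B}}p$; $\Vdash^L_{\mathcal{B}}\varphi\multimap\psi$ iff $\varphi\Vdash^L_{\mathcal{B}}\psi$; $\Vdash^L_{\mathcal{B}}\varphi\otimes\psi$ iff for all $\mathcal{C}\supseteq\mathcal{B}$, atomic $K$, atoms $p$: if $\varphi,\psi\Vdash^K_{\mathcal{C}}p$ then $\Vdash^{L,K}_{\mathcal{C}}p$; $\Vdash^L_{\mathcal{B}}1$ iff for all $\mathcal{C}\supseteq\mathcal{B}$, $K$, $p$: if $\Vdash^K_{\mathcal{C}}p$ then $\Vdash^{L,K}_{\mathcal{C}}p$; $\Vdash^L_{\mathcal{B}}\varphi\&\psi$ iff $\Vdash^L_{\mathcal{B}}\varphi$ and $\Vdash^L_{\mathcal{B}}\psi$; $\Vdash^L_{\mathcal{B}}\varphi\oplus\psi$ iff for all $\mathcal{C}\supseteq\mathcal{B}$, $K$, $p$: if $\varphi\Vdash^K_{\mathcal{C}}p$ and $\psi\Vdash^K_{\mathcal{C}}p$ then $\Vdash^{L,K}_{\mathcal{C}}p$; $\Vdash^L_{\mathcal{B}}0$ iff $\Vdash^{L,K}_{\mathcal{B}}p$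 for all atoms $p$ and atomic $K$; $\Vdash^L_{\mathcal{B}}\top$ always; $\Vdash^L_{\mathcal{B}}!\varphi$ iff for all $\mathcal{C}\supseteq\mathcal{B}$, $K$, $p$: if (for all $\mathcal{D}\supseteq\mathcal{C}$, $\Vdash^{\varnothing}_{\mathcal{D}}\varphi$ implies $\Vdash^K_{\mathcal{D}}p$) then $\Vdash^{L,K}_{\mathcal{C}}p$. For nonempty multisets: $\Vdash^L_{\mathcal{B}}\Gamma,\Delta$ iff $L=K,M$ with $\Vdash^K_{\mathcal{B}}\Gamma$ and $\Vdash^M_{\mathcal{B}}\Delta$. For a nonempty antecedent written $!\Delta,\Theta$, where $!\Delta$ collects the formulae with top-level connective $!$ (with $\Delta$ the formulae under those $!$) and $\Theta$ contains none: $!\Delta,\Theta\Vdash^L_{\mathcal{B}}\varphi$ iff for all $\mathcal{C}\supseteq\mathcal{B}$ and atomic $K$, if $\Vdash^{\varnothing}_{\mathcal{C}}\delta$ for every $\delta\in\Delta$ and $\Vdash^K_{\mathcal{C}}\Theta$ then $\Vdash^{L,K}_{\mathcal{C}}\varphi$ (when $\Theta$ is empty, $K$ is empty). An empty antecedent: $\varnothing\Vdash^L_{\mathcal{B}}\varphi$ means $\Vdash^L_{\mathcal{B}}\varphi$. *)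

(* base support semantics for ILL (atomic multisets as lists up to Permutation). *)
From Stdlib Require Import List Permutation.
Import ListNotations.
Set Implicit Arguments.

Section BeS.
Variable Atom : Type.

Definition aseq := (list Atom * Atom)%type.
Definition abox := list aseq.
Definition arule := (list abox * abox * Atom)%type.
Definition base := arule -> Prop.

Definition ext (B C : base) : Prop := forall r, B r -> C r.

Definition persistent (B : base) (p : Atom) : Prop :=
  exists S : abox, B ([], S, p) /\ S <> [].

(* derivability  L |-_B p ; multiset union is list concatenation up to Permutation *)
Inductive deriv (B : base) : list Atom -> Atom -> Prop :=
| d_ref (p : Atom) : deriv B [p] p
| d_app (A : list abox) (S : abox) (p : Atom)
        (Cs : list (list Atom))            (* C_1 .. C_m, matched with T_1 .. T_m *)
        (Ds : list (list Atom * Atom))     (* (C_j, d_j), m < j <= n *)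
        (L : list Atom) :
    B (A, S, p) ->
    length Cs = length A ->
    (forall i, i < length A ->
       forall Q q, In (Q, q) (nth i A []) -> deriv B (nth i Cs [] ++ Q) q) ->
    (forall C d, In (C, d) Ds -> persistent B d /\ deriv B C d) ->
    (forall U v, In (U, v) S -> deriv B (map snd Ds ++ U) v) ->
    Permutation L (concat Cs ++ concat (map fst Ds)) ->
    deriv B L p.

Inductive formula : Type :=
| Var (p : Atom)
| Top
| Zero
| One
| Lolli (a b : formula)
| Tensor (a b : formula)
| With (a b : formula)
| Plus (a b : formula)
| Bang (a : formula).

Definition pred := base -> list Atom -> Prop.

Fixpoint multi (ps : list pred) (C : base) (K : list Atom) : Prop :=
  match ps with
  | [] => K = []
  | P :: ps' => exists K1 K2, Permutation K (K1 ++ K2) /\ P C K1 /\ multi ps' C K2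
  end.

(* A piece for a formula !d requires
   d to be supported at C with the empty multiset and consumes no atoms;
   a piece for a non-! formula is its support with its share of K. *)
Definition ant_supp (ps : list pred) (B : base) (L : list Atom) (concl : pred) : Prop :=
  forall C, ext B C -> forall K, multi ps C K -> concl C (L ++ K).

Definition dup (s : pred) : pred * pred := (s, s).

(* (support, antecedent-piece) of a formula *)
Fixpoint sp (phi : formula) : pred * pred :=
  match phi with
  | Var p => dup (fun B L => deriv B L p)
  | Lolli a b => dup (fun B L => ant_supp [(snd (sp a))] B L (fst (sp b)))
  | Tensor a b => dup (fun B L =>
      forall C, ext B C -> forall K p,
        ant_supp [(snd (sp a)); (snd (sp b))] C K (fun C' L' => deriv C' L' p) ->
        deriv C (L ++ K) p)
  | One => dup (fun B L =>
      forall C, ext B C -> forall K p, deriv C K p -> deriv C (L ++ K) p)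
  | With a b => dup (fun B L => (fst (sp a)) B L /\ (fst (sp b)) B L)
  | Plus a b => dup (fun B L =>
      forall C, ext B C -> forall K p,
        ant_supp [(snd (sp a))] C K (fun C' L' => deriv C' L' p) ->
        ant_supp [(snd (sp b))] C K (fun C' L' => deriv C' L' p) ->
        deriv C (L ++ K) p)
  | Zero => dup (fun B L => forall p K, deriv B (L ++ K) p)
  | Top => dup (fun _ _ => True)
  | Bang a =>
      ((fun B L =>
         forall C, ext B C -> forall K p,
           (forall D, ext C D -> (fst (sp a)) D [] -> deriv D K p) ->
           deriv C (L ++ K) p),
       (fun C K => K = [] /\ (fst (sp a)) C []))
  end.

Definition supp (phi : formula) (B : base) (L : list Atom) : Prop := (fst (sp phi)) B L.

Definition asupp (Gamma : list formula) (B : base) (L : list Atom) (phi : formula) : Prop :=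
  match Gamma with
  | [] => supp phi B L
  | _ => ant_supp (map (fun g => (snd (sp g))) Gamma) B L (fst (sp phi))
  end.

End BeS.

(* Call L an atomic eliminator for an antecedent Gamma at B when, in every
   extension C of B, each atom p that Gamma supports with K in C is
   supported there by L,K. By definition, ||-^L_B phi (x) psi says exactly
   that L is an atomic eliminator for phi, psi. The theorem therefore
   follows once atomic elimination is shown to extend to arbitrary
   conclusions chi, by induction on chi: the connectives defined by
   elimination into atoms (0, 1, (x), (+), !) reduce to the atomic case
   after padding the context, -o pushes the extra hypothesis into the
   context, and & splits. *)
From Stdlib Require Import List Permutation.
Import ListNotations.

Section AtomicElimination.
Context {Atom : Type}.

Lemma ext_refl (B : base Atom) : ext B B.
Proof. intros r Hr; exact Hr. Qed.

Lemma ext_trans {B C D : base Atom} : ext B C -> ext C D -> ext B D.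
Proof. intros HBC HCD r Hr; apply HCD, HBC, Hr. Qed.

Lemma persistent_ext {B C : base Atom} {d : Atom} :
  ext B C -> persistent B d -> persistent C d.
Proof. intros HBC [S [HS HSne]]; exists S; split; [apply HBC, HS | exact HSne]. Qed.

Lemma deriv_perm {B : base Atom} {L L' : list Atom} {p : Atom} :
  deriv B L p -> Permutation L L' -> deriv B L' p.
Proof.
  intros [q | A S q Cs Ds L0 HB Hlen HCs HDs HS HL0] HLL'.
  - apply Permutation_length_1_inv in HLL'; subst; apply d_ref.
  - apply (d_app A S q Cs Ds HB Hlen HCs HDs HS).
    exact (Permutation_trans (Permutation_sym HLL') HL0).
Qed.

(* The generated induction principle gives no hypothesis for the derivations
   under the conjunction in the premise on persistent atoms, hence the
   explicit fixpoint. *)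
Lemma deriv_ext {B C : base Atom} :
  ext B C -> forall {L : list Atom} {p : Atom}, deriv B L p -> deriv C L p.
Proof.
  intros HBC. fix IH 3.
  intros L p [q | A S q Cs Ds L0 HB Hlen HCs HDs HS HL0].
  - apply d_ref.
  - apply (d_app A S q Cs Ds (HBC _ HB) Hlen).
    + intros i Hi Q r Hin; exact (IH _ _ (HCs i Hi Q r Hin)).
    + intros C0 d Hin; destruct (HDs C0 d Hin) as [Hpers Hd].
      split; [exact (persistent_ext HBC Hpers) | exact (IH _ _ Hd)].
    + intros U v Hin; exact (IH _ _ (HS U v Hin)).
    + exact HL0.
Qed.

Lemma supp_perm {phi : formula Atom} {B : base Atom} {L L' : list Atom} :
  supp phi B L -> Permutation L L' -> supp phi B L'.
Proof.
  revert B L L'; unfold supp.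
  induction phi as [p | | | | a _ b IHb | a _ b _ | a IHa b IHb | a _ b _ | a _];
    simpl; intros B L L' H HLL'.
  - exact (deriv_perm H HLL').
  - exact I.
  - intros p K; exact (deriv_perm (H p K) (Permutation_app_tail K HLL')).
  - intros C HBC K p Hp; exact (deriv_perm (H C HBC K p Hp) (Permutation_app_tail K HLL')).
  - intros C HBC K HK; exact (IHb _ _ _ (H C HBC K HK) (Permutation_app_tail K HLL')).
  - intros C HBC K p Hp; exact (deriv_perm (H C HBC K p Hp) (Permutation_app_tail K HLL')).
  - destruct H as [Ha Hb]; split; [exact (IHa _ _ _ Ha HLL') | exact (IHb _ _ _ Hb HLL')].
  - intros C HBC K p Hpa Hpb;
      exact (deriv_perm (H C HBC K p Hpa Hpb) (Permutation_app_tail K HLL')).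
  - intros C HBC K p Hp; exact (deriv_perm (H C HBC K p Hp) (Permutation_app_tail K HLL')).
Qed.

Lemma supp_ext {phi : formula Atom} {B C : base Atom} {L : list Atom} :
  ext B C -> supp phi B L -> supp phi C L.
Proof.
  revert B C L; unfold supp.
  induction phi as [p | | | | a _ b _ | a _ b _ | a IHa b IHb | a _ b _ | a _];
    simpl; intros B C L HBC H;
    try (intros D HCD; apply H; exact (ext_trans HBC HCD)).
  - exact (deriv_ext HBC H).
  - exact I.
  - intros p K; exact (deriv_ext HBC (H p K)).
  - destruct H as [Ha Hb]; split; [exact (IHa _ _ _ HBC Ha) | exact (IHb _ _ _ HBC Hb)].
Qed.

Lemma piece_ext {phi : formula Atom} {B C : base Atom} {L : list Atom} :
  ext B C -> snd (sp phi) B L -> snd (sp phi) C L.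
Proof.
  intros HBC H; pose proof (supp_ext (phi := phi) (L := L) HBC) as Hsupp.
  destruct phi as [| | | | | | | | a]; try exact (Hsupp H).
  destruct H as [HL Ha]; split; [exact HL | exact (supp_ext (phi := a) HBC Ha)].
Qed.

Lemma multi_ext (Gamma : list (formula Atom)) {B C : base Atom} {K : list Atom} :
  ext B C -> multi (map (fun g => snd (sp g)) Gamma) B K ->
  multi (map (fun g => snd (sp g)) Gamma) C K.
Proof.
  intros HBC; revert K; induction Gamma as [| g Gamma IH]; simpl; [easy |].
  intros K [K1 [K2 [HK [H1 H2]]]].
  exists K1, K2; split; [exact HK | split; [exact (piece_ext HBC H1) | exact (IH K2 H2)]].
Qed.

Lemma ant_supp_ext {ps : list (pred Atom)} {B C : base Atom} {K : list Atom}
  {concl : pred Atom} :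
  ext B C -> ant_supp ps B K concl -> ant_supp ps C K concl.
Proof. intros HBC H D HCD; exact (H D (ext_trans HBC HCD)). Qed.

Lemma ant_supp_app_r {ps : list (pred Atom)} {B : base Atom} {K K0 : list Atom}
  {concl : pred Atom} :
  (forall C L L', concl C L -> Permutation L L' -> concl C L') ->
  ant_supp ps B K (fun C L => concl C (L ++ K0)) -> ant_supp ps B (K ++ K0) concl.
Proof.
  intros Hperm H C HBC K2 HK2; apply (Hperm _ _ _ (H C HBC K2 HK2)).
  rewrite <- !app_assoc; apply Permutation_app_head, Permutation_app_comm.
Qed.

Definition atomic_elim (ps : list (pred Atom)) (B : base Atom) (L : list Atom) : Prop :=
  forall C, ext B C -> forall K p,
    ant_supp ps C K (fun C' L' => deriv C' L' p) -> deriv C (L ++ K) p.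

Lemma atomic_elim_ext {ps : list (pred Atom)} {B C : base Atom} {L : list Atom} :
  ext B C -> atomic_elim ps B L -> atomic_elim ps C L.
Proof. intros HBC H D HCD; exact (H D (ext_trans HBC HCD)). Qed.

Lemma atomic_elim_deriv {ps : list (pred Atom)} {B : base Atom} {L K K0 : list Atom}
  {p : Atom} :
  atomic_elim ps B L -> ant_supp ps B K (fun C L' => deriv C (L' ++ K0) p) ->
  deriv B ((L ++ K) ++ K0) p.
Proof.
  intros Helim H; rewrite <- app_assoc.
  apply (Helim B (ext_refl B)), ant_supp_app_r; [| exact H].
  intros C L1 L2 Hd; exact (deriv_perm Hd).
Qed.

Lemma atomic_elim_supp {ps : list (pred Atom)} (chi : formula Atom) :
  forall (B : base Atom) (L K : list Atom),
  atomic_elim ps B L -> ant_supp ps B K (supp chi) -> supp chi B (L ++ K).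
Proof.
  unfold supp.
  induction chi as [p | | | | a _ b IHb | a _ b _ | a IHa b IHb | a _ b _ | a _];
    simpl; intros B L K Helim H.
  - exact (Helim B (ext_refl B) K p H).
  - exact I.
  - intros p K0; apply (atomic_elim_deriv Helim).
    intros C HBC K2 HK2; exact (H C HBC K2 HK2 p K0).
  - intros C HBC K0 p Hp; apply (atomic_elim_deriv (atomic_elim_ext HBC Helim)).
    intros D HCD K2 HK2.
    exact (H D (ext_trans HBC HCD) K2 HK2 D (ext_refl D) K0 p (deriv_ext HCD Hp)).
  - intros C HBC K0 HK0.
    apply (supp_perm (phi := b) (L := L ++ (K ++ K0))); [| rewrite app_assoc; reflexivity].
    apply (IHb C L (K ++ K0) (atomic_elim_ext HBC Helim)), ant_supp_app_r;
      [intros ? ? ?; apply supp_perm |].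
    intros D HCD K2 HK2.
    exact (H D (ext_trans HBC HCD) K2 HK2 D (ext_refl D) K0 (multi_ext [a] HCD HK0)).
  - intros C HBC K0 p Hp; apply (atomic_elim_deriv (atomic_elim_ext HBC Helim)).
    intros D HCD K2 HK2.
    apply (H D (ext_trans HBC HCD) K2 HK2 D (ext_refl D) K0 p).
    exact (ant_supp_ext HCD Hp).
  - split; [apply IHa | apply IHb]; try exact Helim;
      intros C HBC K2 HK2; apply (H C HBC K2 HK2).
  - intros C HBC K0 p Hpa Hpb; apply (atomic_elim_deriv (atomic_elim_ext HBC Helim)).
    intros D HCD K2 HK2.
    exact (H D (ext_trans HBC HCD) K2 HK2 D (ext_refl D) K0 p
             (ant_supp_ext HCD Hpa) (ant_supp_ext HCD Hpb)).
  - intros C HBC K0 p Hp; apply (atomic_elim_deriv (atomic_elim_ext HBC Helim)).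
    intros D HCD K2 HK2.
    apply (H D (ext_trans HBC HCD) K2 HK2 D (ext_refl D) K0 p).
    intros E HDE; exact (Hp E (ext_trans HCD HDE)).
Qed.

End AtomicElimination.

Theorem lemma5 (Atom : Type) (B : base Atom) (L K : list Atom)
  (phi psi chi : formula Atom) :
  supp (Tensor phi psi) B L ->
  asupp [phi; psi] B K chi ->
  supp chi B (L ++ K).
Proof.
  intros Htensor Hcut.
  exact (atomic_elim_supp chi B L K Htensor Hcut).
Qed.
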